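(* Let $\Omega$ be a finite $w$-regular graph. Let $A$ and $B$ be induced subgraphs of $\Omega$ with disjoint vertex sets such that $V(A)\cup V(B)=V(\Omega)$ and $|V(A)|\ge|V(B)|$. If $B$ contains an edge, then $A$ contains an edge. *)

From mathcomp Require Import all_boot.
Set Implicit Arguments. Unset Strict Implicit. Unset Printing Implicit Defensive.

Definition simple_graph (T : finType) (e : rel T) : Prop :=
  symmetric e /\ irreflexive e.

Definition nbhd (T : finType) (e : rel T) (x : T) : {set T} := [set y | e x y].

Definition regular (T : finType) (e : rel T) (w : nat) : Prop :=
  forall x : T, #|nbhd e x| = w.

Definition induced_has_edge (T : finType) (e : rel T) (S : {set T}) : Prop :=
  exists x y, [/\ x \in S, y \in S & e x y].

(* Count the edges between A and B twice.  If A spans no edge, every vertex of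
   A sends all its w edges into B, giving |A| w edges.  Each vertex of B sends
   at most w edges into A, and an endpoint of an edge of B strictly fewer, so
   there are fewer than |B| w <= |A| w of them. *)
From mathcomp Require Import all_boot.

Set Implicit Arguments.
Unset Strict Implicit.
Unset Printing Implicit Defensive.

Section InducedEdges.

Variables (T : finType) (e : rel T).

Lemma induced_has_edgeP (S : {set T}) :
  reflect (induced_has_edge e S) [exists x in S, exists y in S, e x y].
Proof.
apply: (iffP idP).
- by case/exists_inP=> x xS /exists_inP[y yS exy]; exists x, y.
- by case=> x [y [xS yS exy]]; apply/exists_inP; exists x => //; apply/exists_inP; exists y.
Qed.

Lemma card_nbhdI (x : T) (S : {set T}) :
  #|nbhd e x :&: S| = \sum_(y in S) e x y.
Proof.
rewrite -sum1_card big_mkcond [RHS]big_mkcond /=.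
by apply: eq_bigr => y _; rewrite !inE; case: (y \in S); case: (e x y).
Qed.

Lemma sum_card_nbhdI (A B : {set T}) : symmetric e ->
  \sum_(a in A) #|nbhd e a :&: B| = \sum_(b in B) #|nbhd e b :&: A|.
Proof.
move=> e_sym; under eq_bigr do rewrite card_nbhdI.
rewrite exchange_big /=; apply: eq_bigr => b _.
by rewrite card_nbhdI; apply: eq_bigr => a _; rewrite e_sym.
Qed.

Lemma edgeless_nbhd_sub (A B : {set T}) (a : T) :
  ~ induced_has_edge e A -> A :|: B = [set: T] -> a \in A ->
  nbhd e a \subset B.
Proof.
move=> noA cov aA; apply/subsetP => y; rewrite inE => eay.
have : y \in A :|: B by rewrite cov inE.
by case/setUP => // yA; case: noA; exists a, y.
Qed.

Lemma card_nbhdI_lt (A : {set T}) (x y : T) :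
  e x y -> y \notin A -> #|nbhd e x :&: A| < #|nbhd e x|.
Proof.
move=> exy yNA; apply/proper_card/properP; split; first exact: subsetIl.
by exists y; rewrite !inE ?exy ?(negbTE yNA).
Qed.

End InducedEdges.

Lemma sum_lt_card_mul (I : finType) (P : {pred I}) (F : I -> nat) (w : nat) (i0 : I) :
  i0 \in P -> F i0 < w -> (forall i, i \in P -> F i <= w) ->
  \sum_(i in P) F i < #|P| * w.
Proof.
move=> Pi0 Fi0 leFw; rewrite -sum_nat_const (bigD1 i0) //= [X in _ < X](bigD1 i0) //=.
by rewrite -addSn leq_add // leq_sum // => i /andP[/leFw].
Qed.

Theorem lemma4p7 (T : finType) (e : rel T) (w : nat)
  (He : simple_graph e) (Hreg : regular e w) (A B : {set T})
  (Hdisj : [disjoint A & B]) (Hcov : A :|: B = [set: T])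
  (Hcard : #|B| <= #|A|) :
  induced_has_edge e B -> induced_has_edge e A.
Proof.
case: He => e_sym _ [b0 [b1 [b0B b1B eb01]]].
case: (induced_has_edgeP e A) => // noA.
have fromA : \sum_(a in A) #|nbhd e a :&: B| = #|A| * w.
  rewrite -sum_nat_const; apply: eq_bigr => a aA.
  by rewrite -(Hreg a) (setIidPl (edgeless_nbhd_sub noA Hcov aA)).
have fromB : \sum_(b in B) #|nbhd e b :&: A| < #|B| * w.
  apply: (sum_lt_card_mul b0B).
    by rewrite -(Hreg b0); apply: (card_nbhdI_lt eb01); rewrite (disjointFl Hdisj).
  by move=> b _; rewrite -(Hreg b) subset_leq_card ?subsetIl.
move: fromB; rewrite -(sum_card_nbhdI _ _ e_sym) fromA ltnNge.
by rewrite leq_mul2r Hcard orbT.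
Qed.
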